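(* Let $V$ be a vector space over a field $\mathbb{K}$ (of arbitrary characteristic, not necessarily finite-dimensional), let $F$ be a bilinear form on $V$, and let $f\in V^*$. For every $p\ge 0$ and every $u\in \mathcal{T}^p(V)$ we have $$ i_f\circ \Lambda_F(u)=\Lambda_F(i_f(u))+(-1)^p\,\Lambda_F(u)\circ i_f $$ as endomorphisms of $\mathcal{T}(V)$.
   Context: $\mathcal{T}(V)=\bigoplus_{p\ge0}\mathcal{T}^p(V)$ is the tensor algebra of $V$ with product $\otimes$, $\mathcal{T}^0(V)=\mathbb{K}$, $\mathcal{T}^1(V)=V$. For $x\in V$, $e_x\in\mathrm{End}(\mathcal{T}(V))$ is $e_x(u)=x\otimes u$. For $f\in V^*$, $i_f$ is the unique linear map $\mathcal{T}(V)\to\mathcal{T}(V)$ with $i_f(1)=0$ and $i_f(x\otimes u)=f(x)u-x\otimes i_f(u)$ for $x\in V$, $u\in\mathcal{T}(V)$; explicitly $i_f(x_1\otimes\cdots\otimes x_p)=\sum_{i=1}^p(-1)^{i-1}f(x_i)\,x_1\otimes\cdots\otimes\widehat{x_i}\otimes\cdots\otimes x_p$. It satisfies $i_f i_g+i_g i_f=0$ for $f,g\in V^*$. For a bilinear form $F$ and $x\in V$, $i_x^F:=i_{f_x}$ where $f_x(y)=F(x,y)$. $\Lambda_F:\mathcal{T}(V)\to\mathrm{End}(\mathcal{T}(V))$ is the unique unital algebra homomorphism with $\Lambda_F(x)=e_x+i_x^F$ for $x\in V$. *)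

From HB Require Import structures.
From mathcomp Require Import all_boot all_order all_algebra.
Set Implicit Arguments. Unset Strict Implicit. Unset Printing Implicit Defensive.
Import Order.TTheory GRing.Theory Num.Theory.
Local Open Scope ring_scope.

Section TensorDefs.
Variable K : fieldType.

Definition lin_map (U W : lmodType K) (h : U -> W) : Prop :=
  forall (a : K) (u v : U), h (a *: u + v) = a *: h u + h v.

Definition lin_form (V : lmodType K) (f : V -> K) : Prop :=
  forall (a : K) (u v : V), f (a *: u + v) = a * f u + f v.

Definition bilinear_form (V : lmodType K) (F : V -> V -> K) : Prop :=
  (forall x, lin_form (F x)) /\ (forall y, lin_form (fun x => F x y)).

Definition alg_hom (A B : algType K) (h : A -> B) : Prop :=
  [/\ lin_map h, h 1 = 1 & forall a b, h (a * b) = h a * h b].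

Definition is_tensor_algebra (V : lmodType K) (A : algType K) (iota : V -> A)
  : Prop :=
  lin_map iota /\
  forall (B : algType K) (phi : V -> B), lin_map phi ->
    (exists h : A -> B, alg_hom h /\ forall x, h (iota x) = phi x) /\
    (forall h1 h2 : A -> B,
        alg_hom h1 -> (forall x, h1 (iota x) = phi x) ->
        alg_hom h2 -> (forall x, h2 (iota x) = phi x) -> h1 =1 h2).

Definition homog (V : lmodType K) (A : algType K) (iota : V -> A) (p : nat)
  (u : A) : Prop :=
  exists s : seq (K * seq V),
    all (fun t => size t.2 == p) s /\
    u = \sum_(t <- s) t.1 *: \prod_(x <- t.2) iota x.

Definition is_interior (V : lmodType K) (A : algType K) (iota : V -> A)
  (f : V -> K) (j : A -> A) : Prop :=
  [/\ lin_map j, j 1 = 0 &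
      forall (x : V) (u : A), j (iota x * u) = f x *: u - iota x * j u].

(* L is Lambda_F : T(V) -> End(T(V)), the unique unital algebra homomorphism
   with L(x) = e_x + i^F_x, where i gives the interior products i_f. *)
Definition is_Lambda (V : lmodType K) (A : algType K) (iota : V -> A)
  (F : V -> V -> K) (i : (V -> K) -> A -> A) (L : A -> A -> A) : Prop :=
  [/\ (forall u, lin_map (L u)),
      (forall (a : K) (u v : A) (w : A), L (a *: u + v) w = a *: L u w + L v w),
      (forall w, L 1 w = w),
      (forall u v w, L (u * v) w = L u (L v w)) &
      (forall x w, L (iota x) w = iota x * w + i (F x) w)].

End TensorDefs.

(** The identity is linear in [u], so it suffices to prove it on monomials
    [x_1 ... x_p], by induction on [p].  The inductive step rests on the
    commutation rule [i_f o Lambda_F(x) = f(x) id - Lambda_F(x) o i_f], which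
    follows from the defining recursion of [i_f] together with the
    anticommutation [i_f i_g = - i_g i_f].  The latter must hold on all of
    [T(V)], not only on monomials; it does because [T(V)] is spanned by
    monomials: their span is a subalgebra containing [V], so by the universal
    property the identity of [T(V)] factors through it. *)
Set Implicit Arguments. Unset Strict Implicit.
From HB Require Import structures.
From mathcomp Require Import all_boot all_order all_algebra.
From Stdlib Require Import ClassicalEpsilon.
Import GRing.Theory.
Local Open Scope ring_scope.

Section LinMap.
Variables (K : fieldType) (U W : lmodType K) (h : U -> W).
Hypothesis h_lin : lin_map h.

HB.instance Definition _ := GRing.isLinear.Build K U W *:%R h h_lin.

Lemma lin_map0 : h 0 = 0. Proof. exact: linear0. Qed.
Lemma lin_mapZ a u : h (a *: u) = a *: h u. Proof. exact: linearZ. Qed.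
Lemma lin_mapD u v : h (u + v) = h u + h v. Proof. exact: linearD. Qed.
Lemma lin_mapB u v : h (u - v) = h u - h v. Proof. exact: linearB. Qed.

End LinMap.

Section MonomialSpan.
Variables (K : fieldType) (V : lmodType K) (A : algType K) (iota : V -> A).

Lemma big_monomial_ind (P : A -> Prop) (Q : pred (seq V))
    (s : seq (K * seq V)) :
  P 0 -> (forall a u v, P u -> P v -> P (a *: u + v)) ->
  (forall l, Q l -> P (\prod_(x <- l) iota x)) ->
  all (fun t => Q t.2) s ->
  P (\sum_(t <- s) t.1 *: \prod_(x <- t.2) iota x).
Proof.
move=> P0 P_lin P_mon; elim: s => [|t s IHs] /=; first by rewrite big_nil.
by case/andP=> Qt Qs; rewrite big_cons; apply: P_lin; [apply: P_mon | apply: IHs].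
Qed.

Definition monomial_span (a : A) : Prop :=
  exists s : seq (K * seq V), a = \sum_(t <- s) t.1 *: \prod_(x <- t.2) iota x.

Definition monomial_spanb (a : A) : bool :=
  if excluded_middle_informative (monomial_span a) then true else false.

Lemma monomial_spanP a : reflect (monomial_span a) (monomial_spanb a).
Proof. by rewrite /monomial_spanb; case: excluded_middle_informative; constructor. Qed.

Lemma monomial_span_monomial l : monomial_spanb (\prod_(x <- l) iota x).
Proof. by apply/monomial_spanP; exists [:: (1, l)]; rewrite big_seq1 scale1r. Qed.

Lemma monomial_span_iota x : monomial_spanb (iota x).
Proof. by have := monomial_span_monomial [:: x]; rewrite big_seq1. Qed.

Lemma monomial_span_subalg_closed : GRing.subsemialg_closed monomial_spanb.
Proof.
split; [|split| |].
- by have := monomial_span_monomial [::]; rewrite big_nil.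
- by apply/monomial_spanP; exists [::]; rewrite big_nil.
- move=> u v /monomial_spanP[s1 ->] /monomial_spanP[s2 ->].
  by apply/monomial_spanP; exists (s1 ++ s2); rewrite big_cat.
- move=> a u /monomial_spanP[s ->]; apply/monomial_spanP.
  exists [seq (a * t.1, t.2) | t <- s]; rewrite big_map scaler_sumr.
  by apply: eq_bigr => t _; rewrite scalerA.
- move=> u v /monomial_spanP[s1 ->] /monomial_spanP[s2 ->]; apply/monomial_spanP.
  exists [seq (t1.1 * t2.1, t1.2 ++ t2.2) | t1 <- s1, t2 <- s2].
  rewrite big_allpairs_dep mulr_suml; apply: eq_bigr => t1 _.
  rewrite mulr_sumr; apply: eq_bigr => t2 _ /=.
  by rewrite big_cat -scalerAl -scalerAr scalerA.
Qed.

Definition monomial_subalg : Type := {a : A | monomial_spanb a}.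
HB.instance Definition _ := [isSub for (@sval A monomial_spanb) : monomial_subalg -> A].
HB.instance Definition _ := [Choice of monomial_subalg by <:].
HB.instance Definition _ := GRing.SubChoice_isSubAlgebra.Build K A monomial_spanb
  monomial_subalg monomial_span_subalg_closed.

Lemma val_monomial_subalg_hom : alg_hom (val : monomial_subalg -> A).
Proof.
split; [|exact: rmorph1 | exact: rmorphM].
by move=> a u v; rewrite linearD linearZ.
Qed.

Lemma tensor_algebra_monomial_span :
  is_tensor_algebra iota -> forall a, monomial_span a.
Proof.
case=> iota_lin univ a.
pose phi x : monomial_subalg := exist _ (iota x) (monomial_span_iota x).
have phi_lin : lin_map phi by move=> b u v; apply: val_inj; rewrite /= iota_lin.
have [[h [[h_lin h1 hM] h_iota]] _] := univ _ phi phi_lin.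
have valh_hom : alg_hom (fun a => val (h a)).
  have [val_lin val1 valM] := val_monomial_subalg_hom.
  by split=> [b u v|//|u v]; rewrite ?h_lin ?val_lin ?h1 ?val1 ?hM ?valM.
have [_ univ_uniq] := univ A iota iota_lin.
have -> : a = val (h a).
  have id_hom : alg_hom (@id A) by [].
  by apply: (univ_uniq id _ id_hom _ valh_hom) => // x; rewrite h_iota.
exact/monomial_spanP/valP.
Qed.

Lemma tensor_algebra_ind (P : A -> Prop) :
  is_tensor_algebra iota ->
  P 0 -> (forall a u v, P u -> P v -> P (a *: u + v)) ->
  (forall l, P (\prod_(x <- l) iota x)) -> forall a, P a.
Proof.
move=> T P0 P_lin P_mon a; have [s ->] := tensor_algebra_monomial_span T a.
by apply: (big_monomial_ind (Q := predT)) => //; apply/allP.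
Qed.

End MonomialSpan.

Lemma interior_anticomm (K : fieldType) (V : lmodType K) (A : algType K)
    (iota : V -> A) (f g : V -> K) (j1 j2 : A -> A) :
  is_tensor_algebra iota -> is_interior iota f j1 -> is_interior iota g j2 ->
  forall w, j1 (j2 w) = - j2 (j1 w).
Proof.
move=> T [j1_lin j1_1 j1_mul] [j2_lin j2_1 j2_mul].
apply: (tensor_algebra_ind (P := fun w => j1 (j2 w) = - j2 (j1 w)) T) => /=.
- by rewrite !(lin_map0 j1_lin, lin_map0 j2_lin) oppr0.
- by move=> a u v IHu IHv; rewrite j2_lin j1_lin j1_lin j2_lin IHu IHv scalerN opprD.
elim=> [|x l IHl].
  by rewrite big_nil j1_1 j2_1 !(lin_map0 j1_lin, lin_map0 j2_lin) oppr0.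
rewrite big_cons j1_mul j2_mul (lin_mapB j1_lin) (lin_mapB j2_lin).
rewrite (lin_mapZ j1_lin) (lin_mapZ j2_lin) j1_mul j2_mul IHl.
by rewrite mulrN !opprB addrA.
Qed.

Section Lambda.
Variables (K : fieldType) (V : lmodType K) (A : algType K) (iota : V -> A).
Variables (F : V -> V -> K) (i : (V -> K) -> A -> A) (L : A -> A -> A).
Variable f : V -> K.
Hypothesis L_Lambda : is_Lambda iota F i L.

Lemma Lambda_linl w : lin_map (L^~ w).
Proof. by case: L_Lambda => _ L_lin _ _ _ a u v; apply: L_lin. Qed.

Hypotheses (T : is_tensor_algebra iota) (F_lin : forall x, lin_form (F x)).
Hypotheses (i_interior : forall g, lin_form g -> is_interior iota g (i g)).
Hypothesis f_lin : lin_form f.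

Lemma interior_Lambda_iota x w :
  i f (L (iota x) w) = f x *: w - L (iota x) (i f w).
Proof.
have [if_lin _ if_mul] := i_interior f_lin.
have [_ _ _ _ L_iota] := L_Lambda.
rewrite !L_iota (lin_mapD if_lin) if_mul.
by rewrite (interior_anticomm T (i_interior f_lin) (i_interior (F_lin x))) opprD addrA.
Qed.

Lemma interior_Lambda_monomial l w :
  i f (L (\prod_(x <- l) iota x) w) =
  L (i f (\prod_(x <- l) iota x)) w
    + (-1) ^+ size l *: L (\prod_(x <- l) iota x) (i f w).
Proof.
have [if_lin if1 if_mul] := i_interior f_lin.
have [Lu_lin _ L1 LM _] := L_Lambda.
elim: l => [|x l IHl].
  by rewrite big_nil if1 L1 (lin_map0 (Lambda_linl w)) add0r expr0 scale1r L1.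
rewrite big_cons LM interior_Lambda_iota IHl if_mul.
rewrite (lin_mapB (Lambda_linl w)) (lin_mapZ (Lambda_linl w)) LM.
rewrite (lin_mapD (Lu_lin _)) (lin_mapZ (Lu_lin _)) LM.
by rewrite exprS mulN1r scaleNr opprD addrA.
Qed.

End Lambda.

Theorem mainTheorem1 (K : fieldType) (V : lmodType K) (A : algType K)
  (iota : V -> A) (F : V -> V -> K) (i : (V -> K) -> A -> A)
  (L : A -> A -> A) (f : V -> K) :
  is_tensor_algebra iota ->
  bilinear_form F ->
  (forall g : V -> K, lin_form g -> is_interior iota g (i g)) ->
  is_Lambda iota F i L ->
  lin_form f ->
  forall (p : nat) (u : A), homog iota p u ->
  forall w : A, i f (L u w) = L (i f u) w + (-1) ^+ p *: L u (i f w).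
Proof.
move=> T [F_lin _] i_interior L_Lambda f_lin p _ [s [s_deg ->]] w.
have [if_lin _ _] := i_interior f f_lin.
have [_ L_lin _ _ _] := L_Lambda.
apply: (big_monomial_ind
  (P := fun u => i f (L u w) = L (i f u) w + (-1) ^+ p *: L u (i f w))
  (Q := fun l => size l == p)) s_deg => /=.
- by rewrite !(lin_map0 (Lambda_linl L_Lambda _), lin_map0 if_lin) scaler0 addr0.
- move=> a u v IHu IHv.
  rewrite L_lin if_lin L_lin if_lin L_lin IHu IHv !scalerDr !scalerA mulrC.
  by rewrite addrACA.
- move=> l /eqP <-.
  exact: (interior_Lambda_monomial L_Lambda T F_lin i_interior f_lin).
Qed.
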